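(* Let $p\ge3$ be a prime and let $C$ be a Hochschild cochain complex, free over $\mathbb Z$, with its cup product $*$ and brace operations. Let $\tilde x\in C$ be a cochain of odd degree with $\partial\tilde x\in pC$, and let $x$ be its image in $C\otimes\mathbb Z_p$, so that $x$ is a cycle. For a cochain $\tilde y$ with $\partial\tilde y\in pC$ and image $y$ mod $p$, define the chain-level Bockstein $\beta y:=\frac1p\partial\tilde y\bmod p$. Set $\xi_1x:=x^{[p]}$ and $\zeta_1x:=\sum_{i=1}^{p-1}\frac{(-1)^i}{i}x^{[i]}*x^{[p-i]}$, where $x^{[k]}=(\cdots((x\{x\})\{x\})\cdots)\{x\}$ ($k-1$ braces). Then, on the level of chains in $C\otimes\mathbb Z_p$, $$\zeta_1x=\beta(\xi_1x)-(\mathrm{ad}\,x)^{p-1}(\beta x),$$ where $\beta(\xi_1x)$ is computed from the lift $\tilde x^{[p]}$, and $\mathrm{ad}\,x=[x,\cdot\,]$ with Gerstenhaber bracket $[a,b]=a\{b\}-(-1)^{|a||b|}b\{a\}$, $|a|=\deg a+1$.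
   Context: For the Hochschild cochain complex of an associative algebra, $*$ is the cup product and $a\{b_1,\dots,b_n\}$ are the Gerstenhaber–Voronov brace operations; $\deg$ is the cochain degree, and the brace $\{\}_{n+1}$ raises $\deg$ by $n$. *)

From HB Require Import structures.
From mathcomp Require Import all_boot all_order all_algebra.
Set Implicit Arguments. Unset Strict Implicit. Unset Printing Implicit Defensive.
Import Order.TTheory GRing.Theory Num.Theory.
Local Open Scope ring_scope.

Definition Zfree (M : zmodType) : Prop :=
  exists (J : eqType) (b : J -> M),
    (forall m : M, exists s : seq (J * int), m = \sum_(jc <- s) b jc.1 *~ jc.2) /\
    (forall (s : seq J) (c : J -> int), uniq s ->
        \sum_(j <- s) b j *~ c j = 0 -> forall j, j \in s -> c j = 0).

(* An element of the full cochain
   complex  prod_n Hom_Z(A^{(x)n}, A)  is represented by a function on finite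
   sequences of elements of A: its restriction to sequences of length n is its
   component of degree n. *)
Definition cochain (A : pzRingType) := seq A -> A.

Definition is_cochain (A : pzRingType) (n : nat) (f : cochain A) : Prop :=
  (forall s, size s != n -> f s = 0) /\
  (forall (s t : seq A) (a b : A), (size s + size t).+1 = n ->
      f (s ++ (a + b) :: t) = f (s ++ a :: t) + f (s ++ b :: t)).

Definition mergeat (A : pzRingType) (i : nat) (s : seq A) : seq A :=
  take i s ++ (nth 0 s i * nth 0 s i.+1) :: drop i.+2 s.

(* Hochschild differential: for f of degree n,
   (df)(a_0,..,a_n) = a_0 f(a_1..a_n) + sum_{i<n} (-1)^(i+1) f(..,a_i a_(i+1),..)
                      + (-1)^(n+1) f(a_0..a_(n-1)) a_n. *)
Definition hdiff (A : pzRingType) (f : cochain A) : cochain A :=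
  fun s => match s with
  | [::] => 0
  | a :: t => a * f t
      + \sum_(i < size t) (-1) ^+ i.+1 * f (mergeat i s)
      + (-1) ^+ (size s) * f (belast a t) * last a t
  end.

Definition cup (A : pzRingType) (f g : cochain A) : cochain A :=
  fun s => \sum_(k < (size s).+1) f (take k s) * g (drop k s).

(* Gerstenhaber brace f{g}: for f of degree m and g of degree n,
   f{g}(a_1..a_(m+n-1)) =
     sum_{i=0}^{m-1} (-1)^(i(n-1)) f(a_1..a_i, g(a_(i+1)..a_(i+n)), a_(i+n+1)..);
   written degree-wise (n ranges over the degree of the inserted component). *)
Definition brace (A : pzRingType) (f g : cochain A) : cochain A :=
  fun s => \sum_(i < (size s).+1) \sum_(n < (size s).+1 - i)
     (-1) ^+ (i * n.+1) * f (take i s ++ g (take n (drop i s)) :: drop (i + n) s).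

Definition gbracket (A : pzRingType) (m n : nat) (a b : cochain A) : cochain A :=
  fun s => brace a b s - (-1) ^+ (m.+1 * n.+1) * brace b a s.

Fixpoint adpow (A : pzRingType) (d e k : nat) (x y : cochain A) : cochain A :=
  match k with
  | 0 => y
  | k'.+1 => gbracket d (e + k' * (d - 1)) x (adpow d e k' x y)
  end.

Definition bpow (A : pzRingType) (x : cochain A) (k : nat) : cochain A :=
  iter k.-1 (fun y => brace y x) x.

(* zeta_1 x = sum_{i=1}^{p-1} c_i x^[i] * x^[p-i], where the integers c_i
   represent (-1)^i / i modulo p. *)
Definition zeta1 (A : pzRingType) (p : nat) (c : nat -> int) (x : cochain A)
  : cochain A :=
  fun s => \sum_(1 <= i < p) cup (bpow x i) (bpow x (p - i)) s *~ c i.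

(* For x of odd degree all insertion signs in the brace calculus disappear, and
   the Hochschild differential is d f = mu{f} - f{mu} for the multiplication mu.
   The Hirsch formula (a * b){x} = a * b{x} + a{x} * b and the pre-Lie identity
   then give d(y{x}) = (dy){x} + y{dx} - y * x - x * y, and, writing R w = w{x}
   and ad w = x{w} - w{x} = [x, w],
     x^[n]{w} = sum_m C(n, m) R^(n-m) ad^m w.
   With d x = p u, induction on k yields
     d x^[k] = p sum_(1 <= j <= k) C(k, j) R^(k-j) ad^(j-1) u
               - sum_(0 < j < k) C(k, j) x^[j] * x^[k-j].
   For k = p, the prime p divides every C(p, j) with 0 < j < p, so modulo p,
   beta(x^[p]) = ad^(p-1) u - sum_j (C(p, j)/p) x^[j] * x^[p-j], and since
   C(p, j)/p = C(p-1, j-1)/j = -(-1)^j/j modulo p, the last term is zeta_1 x. *)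

From HB Require Import structures.
From mathcomp Require Import all_boot all_order all_algebra.
From mathcomp Require Import boolp functions.
From mathcomp Require Import zify ring.
Import Order.TTheory GRing.Theory Num.Theory.
Set Implicit Arguments. Unset Strict Implicit. Unset Printing Implicit Defensive.
Local Open Scope ring_scope.

Lemma mulrzfctE (T : Type) (V : zmodType) (f : T -> V) (k : int) t : (f *~ k) t = f t *~ k.
Proof. by case: k => k; rewrite ?NegzE ?mulrNz -!pmulrn ?opprfctE natmulfctE. Qed.

Section SumSplits.
Variables (T : Type) (V : zmodType).
Implicit Types (s : seq T) (F G : seq T -> seq T -> V).

Definition sum_splits s F : V := \sum_(k < (size s).+1) F (take k s) (drop k s).

Lemma sum_splits_nil F : sum_splits [::] F = F [::] [::].
Proof. by rewrite /sum_splits big_ord_recl big_ord0 addr0. Qed.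

Lemma sum_splits_cons e s F :
  sum_splits (e :: s) F = F [::] (e :: s) + sum_splits s (fun x y => F (e :: x) y).
Proof. by rewrite /sum_splits big_ord_recl. Qed.

Lemma eq_sum_splits_in s F G :
  (forall x y, x ++ y = s -> F x y = G x y) -> sum_splits s F = sum_splits s G.
Proof. by move=> FG; apply: eq_bigr => k _; rewrite FG ?cat_take_drop. Qed.

Lemma eq_sum_splits s F G : F =2 G -> sum_splits s F = sum_splits s G.
Proof. by move=> FG; apply: eq_sum_splits_in => x y _. Qed.

Lemma sum_splits_eq0 s F : (forall x y, x ++ y = s -> F x y = 0) -> sum_splits s F = 0.
Proof. by move=> F0; apply: big1 => k _; rewrite F0 ?cat_take_drop. Qed.

Lemma sum_splitsD s F G :
  sum_splits s (fun x y => F x y + G x y) = sum_splits s F + sum_splits s G.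
Proof. exact: big_split. Qed.

Lemma exchange_sum_splits s t (H : seq T -> seq T -> seq T -> seq T -> V) :
  sum_splits s (fun x y => sum_splits t (H x y)) =
  sum_splits t (fun u v => sum_splits s (fun x y => H x y u v)).
Proof. exact: exchange_big. Qed.

Lemma sum_splits_cat_cons x e z F :
  sum_splits (x ++ e :: z) F =
  sum_splits x (fun a b => F a (b ++ e :: z)) + sum_splits z (fun a b => F (x ++ e :: a) b).
Proof.
elim: x F => [|h x IH] F; first by rewrite sum_splits_nil sum_splits_cons.
by rewrite cat_cons sum_splits_cons IH sum_splits_cons addrA.
Qed.

(* Both sides sum over the decompositions s = x ++ y ++ z. *)
Lemma sum_splits_assoc s (H : seq T -> seq T -> seq T -> V) :
  sum_splits s (fun x r => sum_splits r (H x)) =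
  sum_splits s (fun q z => sum_splits q (fun x y => H x y z)).
Proof.
elim: s H => [|e s IH] H; first by rewrite !sum_splits_nil.
rewrite [LHS]sum_splits_cons (IH (fun x => H (e :: x))) [RHS]sum_splits_cons.
rewrite sum_splits_nil sum_splits_cons.
under [in RHS]eq_sum_splits => q z do rewrite sum_splits_cons.
by rewrite sum_splitsD !addrA.
Qed.

Lemma sum_splits_lnil s F :
  (forall e x y, F (e :: x) y = 0) -> sum_splits s F = F [::] s.
Proof.
case: s => [|e s] F0; first by rewrite sum_splits_nil.
by rewrite sum_splits_cons sum_splits_eq0 ?addr0.
Qed.

Lemma sum_splits_rnil s F :
  (forall x e y, F x (e :: y) = 0) -> sum_splits s F = F s [::].
Proof.
elim: s F => [|e s IH] F F0; first by rewrite sum_splits_nil.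
by rewrite sum_splits_cons F0 add0r (IH (fun x => F (e :: x))).
Qed.

Lemma sum_splits_lsize1 e s F :
  (forall x y, size x != 1%N -> F x y = 0) -> sum_splits (e :: s) F = F [:: e] s.
Proof.
by move=> F0; rewrite sum_splits_cons F0 // add0r sum_splits_lnil // => *; rewrite F0.
Qed.

Lemma sum_splits_rsize1 e s F :
  (forall x y, size y != 1%N -> F x y = 0) ->
  sum_splits (e :: s) F = F (belast e s) [:: last e s].
Proof.
elim: s e F => [|e' s IH] e F F0.
  by rewrite sum_splits_cons sum_splits_nil (F0 [:: e] [::]) ?addr0.
by rewrite sum_splits_cons F0 // add0r (IH e' (fun x => F (e :: x))) // => *; rewrite F0.
Qed.

End SumSplits.

Lemma sum_splitsMl (R : pzRingType) (T : Type) (s : seq T) a (F : seq T -> seq T -> R) :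
  sum_splits s (fun x y => a * F x y) = a * sum_splits s F.
Proof. by rewrite /sum_splits mulr_sumr. Qed.

Lemma sum_splitsMr (R : pzRingType) (T : Type) (s : seq T) a (F : seq T -> seq T -> R) :
  sum_splits s (fun x y => F x y * a) = sum_splits s F * a.
Proof. by rewrite /sum_splits mulr_suml. Qed.

Section Hochschild.
Variable A : pzRingType.
Implicit Types (f g h : cochain A) (s t u v : seq A).

Lemma cochain_supp n f s : is_cochain n f -> size s != n -> f s = 0.
Proof. by case=> f0 _; apply: f0. Qed.

Lemma cochainD n f u v (a b : A) :
  is_cochain n f -> f (u ++ (a + b) :: v) = f (u ++ a :: v) + f (u ++ b :: v).
Proof.
case=> f0 fD; have [uvn|uvn] := eqVneq (size u + size v).+1 n; first exact: fD.
by rewrite !f0 ?addr0 // size_cat /= addnS.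
Qed.

Lemma cochain0 n f u v : is_cochain n f -> f (u ++ 0 :: v) = 0.
Proof.
move=> fn; have := cochainD u v 0 0 fn; rewrite addr0 => /eqP.
by rewrite -subr_eq subrr eq_sym => /eqP.
Qed.

Lemma cochainN n f u v (a : A) : is_cochain n f -> f (u ++ (- a) :: v) = - f (u ++ a :: v).
Proof. by move=> fn; apply/eqP; rewrite -addr_eq0 -(cochainD _ _ _ _ fn) addNr (cochain0 _ _ fn). Qed.

Lemma cochain_sign n f u v k (a : A) :
  is_cochain n f -> f (u ++ ((-1) ^+ k * a) :: v) = (-1) ^+ k * f (u ++ a :: v).
Proof.
by move=> fn; rewrite -signr_odd; case: odd; rewrite ?mul1r // !mulN1r (cochainN _ _ _ fn).
Qed.

Lemma cochain_sum_splits n f u v s (F : seq A -> seq A -> A) :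
  is_cochain n f ->
  f (u ++ sum_splits s F :: v) = sum_splits s (fun x y => f (u ++ F x y :: v)).
Proof.
move=> fn; rewrite /sum_splits; elim: (index_enum _) => [|k r IH].
  by rewrite !big_nil (cochain0 _ _ fn).
by rewrite !big_cons (cochainD _ _ _ _ fn) IH.
Qed.

Lemma is_cochain0 n : is_cochain n (0 : cochain A).
Proof. by split=> [//|s t a b _]; apply/esym/addr0. Qed.

Lemma is_cochainD n f g : is_cochain n f -> is_cochain n g -> is_cochain n (f + g).
Proof.
move=> [f0 fD] [g0 gD]; split=> [s sn|s t a b stn]; rewrite !addrfctE; first by rewrite f0 ?g0 ?addr0.
by rewrite fD // gD // addrACA.
Qed.

Lemma is_cochainN n f : is_cochain n f -> is_cochain n (- f).
Proof.
move=> [f0 fD]; split=> [s sn|s t a b stn]; rewrite !opprfctE; first by rewrite f0 ?oppr0.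
by rewrite fD // opprD.
Qed.

Lemma is_cochainB n f g : is_cochain n f -> is_cochain n g -> is_cochain n (f - g).
Proof. by move=> fn gn; apply/is_cochainD/is_cochainN. Qed.

Lemma is_cochainMn n f k : is_cochain n f -> is_cochain n (f *+ k).
Proof.
by move=> fn; elim: k => [|k IH]; rewrite ?mulr0n ?mulrS; [apply: is_cochain0 | apply: is_cochainD].
Qed.

Lemma is_cochainMz n f (k : int) : is_cochain n f -> is_cochain n (f *~ k).
Proof.
by case: k => k fn; rewrite ?NegzE ?mulrNz; [|apply: is_cochainN]; apply: is_cochainMn.
Qed.

Lemma is_cochain_sum n (I : Type) (r : seq I) (P : pred I) (F : I -> cochain A) :
  (forall i, P i -> is_cochain n (F i)) -> is_cochain n (\sum_(i <- r | P i) F i).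
Proof.
move=> Fn; elim: r => [|i r IH]; rewrite ?big_nil ?big_cons; first exact: is_cochain0.
by case: ifP => // Pi; apply: is_cochainD (Fn _ Pi) IH.
Qed.

Lemma cupE f g s : cup f g s = sum_splits s (fun x y => f x * g y).
Proof. by []. Qed.

Lemma is_cochain_cup m n f g :
  is_cochain m f -> is_cochain n g -> is_cochain (m + n) (cup f g).
Proof.
move=> fm gn; split=> [s smn|u v a b _].
  rewrite cupE; apply: sum_splits_eq0 => x y xys.
  have [xm|xm] := eqVneq (size x) m; last by rewrite (cochain_supp fm xm) mul0r.
  rewrite (cochain_supp gn) ?mulr0 //.
  by apply: contraNneq smn => yn; rewrite -xys size_cat xm yn.
rewrite !cupE !sum_splits_cat_cons.
under eq_sum_splits => x y do rewrite (cochainD _ _ _ _ gn) mulrDr.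
under [X in _ + X = _]eq_sum_splits => x y do rewrite (cochainD _ _ _ _ fm) mulrDl.
by rewrite !sum_splitsD addrACA.
Qed.

Definition bracer h f := brace f h.

Lemma bracer_is_zmod_morphism h : zmod_morphism (bracer h).
Proof.
move=> f g; apply/funext => s; rewrite /bracer /brace !addrfctE !opprfctE /=.
rewrite -sumrB; apply: eq_bigr => i _; rewrite -sumrB; apply: eq_bigr => n _.
by rewrite -mulrBr.
Qed.

HB.instance Definition _ h :=
  GRing.isZmodMorphism.Build (cochain A) (cochain A) (bracer h) (bracer_is_zmod_morphism h).

Definition insert_sign (i n : nat) : A := (-1) ^+ (i * n.+1).

Lemma insert_sign0 n : insert_sign 0 n = 1.
Proof. by rewrite /insert_sign mul0n. Qed.

Lemma insert_sign_odd i n : odd n -> insert_sign i n = 1.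
Proof. by move=> on; rewrite /insert_sign -signr_odd oddM /= on andbF. Qed.

Lemma brace_sum_splits f g s :
  brace f g s = sum_splits s (fun x r => sum_splits r (fun y z =>
     insert_sign (size x) (size y) * f (x ++ g y :: z))).
Proof.
rewrite /brace /sum_splits; apply: eq_bigr => i _.
have si : (i <= size s)%N by rewrite -ltnS.
rewrite size_drop -subSn //; apply: eq_bigr => n _.
have ni : (n <= size (drop i s))%N by rewrite size_drop -ltnS -subSn.
by rewrite /insert_sign size_takel // size_takel // drop_drop addnC.
Qed.

Lemma braceDr n f g h : is_cochain n f -> brace f (g + h) = brace f g + brace f h.
Proof.
move=> fn; apply/funext => s; rewrite !addrfctE /= !brace_sum_splits.
rewrite -sum_splitsD; apply: eq_sum_splits => x r.
rewrite -sum_splitsD; apply: eq_sum_splits => y z.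
by rewrite (cochainD _ _ _ _ fn) mulrDr.
Qed.

Lemma brace0r n f : is_cochain n f -> brace f 0 = 0.
Proof.
move=> fn; have := braceDr 0 0 fn; rewrite addr0 => /eqP.
by rewrite -subr_eq subrr eq_sym => /eqP.
Qed.

Lemma braceBr n f g h : is_cochain n f -> brace f (g - h) = brace f g - brace f h.
Proof.
by move=> fn; apply/eqP; rewrite eq_sym subr_eq -(braceDr _ _ fn) subrK.
Qed.

Lemma braceMnr n f g k : is_cochain n f -> brace f (g *+ k) = brace f g *+ k.
Proof.
move=> fn; elim: k => [|k IH]; first by rewrite !mulr0n (brace0r fn).
by rewrite !mulrS (braceDr _ _ fn) IH.
Qed.

(* The three sums insert [g] left of [e], over [e], and right of [e]. *)
Lemma brace_cat_cons f g u e v :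
  brace f g (u ++ e :: v) =
    sum_splits u (fun x r => sum_splits r (fun y y' =>
        insert_sign (size x) (size y) * f ((x ++ g y :: y') ++ e :: v)))
  + sum_splits u (fun x r => sum_splits v (fun z1 z2 =>
        insert_sign (size x) (size r + (size z1).+1) * f (x ++ g (r ++ e :: z1) :: z2)))
  + sum_splits v (fun z1 z2 => sum_splits z2 (fun y z =>
        insert_sign (size u + (size z1).+1) (size y) * f (u ++ e :: z1 ++ g y :: z))).
Proof.
rewrite brace_sum_splits sum_splits_cat_cons.
under eq_sum_splits => x r do rewrite sum_splits_cat_cons.
rewrite sum_splitsD; congr (_ + _ + _).
- by do 2!apply: eq_sum_splits => ? ?; rewrite -catA.
- by do 2!apply: eq_sum_splits => ? ?; rewrite size_cat.
- by do 2!apply: eq_sum_splits => ? ?; rewrite size_cat -catA.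
Qed.

Lemma is_cochain_brace m n f g :
  is_cochain m f -> is_cochain n g -> (0 < m)%N -> is_cochain (m + n).-1 (brace f g).
Proof.
move=> fm gn m_gt0; split=> [s smn|u v a b _].
  rewrite brace_sum_splits; apply: sum_splits_eq0 => x r xrs.
  apply: sum_splits_eq0 => y z yzr.
  have [yn|yn] := eqVneq (size y) n; last by rewrite (cochain_supp gn yn) (cochain0 _ _ fm) mulr0.
  rewrite (cochain_supp fm) ?mulr0 //; apply: contraNneq smn.
  by rewrite -xrs -yzr !size_cat /= yn; lia.
rewrite !brace_cat_cons.
under eq_sum_splits => x r do under eq_sum_splits => y y' do
  rewrite (cochainD _ _ _ _ fm) mulrDr.
under [X in _ + X + _ = _]eq_sum_splits => x r do under eq_sum_splits => y y' do
  rewrite (cochainD _ _ _ _ gn) (cochainD _ _ _ _ fm) mulrDr.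
under [X in _ + X = _]eq_sum_splits => x r do under eq_sum_splits => y y' do
  rewrite (cochainD _ _ _ _ fm) mulrDr.
under eq_sum_splits => x r do rewrite sum_splitsD.
under [X in _ + X + _ = _]eq_sum_splits => x r do rewrite sum_splitsD.
under [X in _ + X = _]eq_sum_splits => x r do rewrite sum_splitsD.
by rewrite !sum_splitsD [LHS](AC ((2*2)*2) (((1*3)*5)*((2*4)*6))).
Qed.

Definition mul_cochain : cochain A := fun s => if s is [:: a; b] then a * b else 0.
Definition id_cochain : cochain A := fun s => if s is [:: a] then a else 0.

Lemma id_cochain_size s : size s != 1%N -> id_cochain s = 0.
Proof. by case: s => [|a [|b s]]. Qed.

Lemma mul_cochain_size s : size s != 2 -> mul_cochain s = 0.
Proof. by case: s => [|a [|b [|c s]]]. Qed.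

Lemma is_cochain_id : is_cochain 1 id_cochain.
Proof. by split=> [s|[|? ?] [|? ?] a b]; first exact: id_cochain_size. Qed.

Lemma brace_idl f : brace id_cochain f = f.
Proof.
apply/funext => s; rewrite brace_sum_splits sum_splits_lnil => [|e x r]; last first.
  by apply: sum_splits_eq0 => y z _; case: x => [|? ?]; rewrite /= mulr0.
by rewrite sum_splits_rnil => [|x e y]; rewrite /= ?insert_sign0 ?mul1r ?mulr0.
Qed.

Lemma brace_mull n f : is_cochain n f -> odd n ->
  brace mul_cochain f = cup f id_cochain + cup id_cochain f.
Proof.
move=> fn n_odd; apply/funext => -[|e t]; rewrite addrfctE /=.
  by rewrite brace_sum_splits !cupE !sum_splits_nil /= !mulr0 mul0r addr0.
rewrite brace_sum_splits sum_splits_cons !cupE.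
rewrite sum_splits_rsize1 => [|x y]; last by case: y => [|? [|? ?]]; rewrite /= ?mulr0.
rewrite sum_splits_rsize1 => [|x y]; last by case: y => [|? [|? ?]]; rewrite /= ?mulr0.
rewrite sum_splits_lsize1 => [|x y]; last by case: x => [|? [|? ?]]; rewrite /= ?mul0r.
rewrite sum_splits_lnil => [|e' x r]; last first.
  by apply: sum_splits_eq0 => y z _; case: x => [|? ?]; rewrite /= mulr0.
rewrite sum_splits_rnil => [|x e' y]; last by rewrite /= mulr0.
rewrite /= insert_sign0 mul1r; congr (_ + _).
have [tn|tn] := eqVneq (size t) n; first by rewrite insert_sign_odd ?tn // mul1r.
by rewrite (cochain_supp fn tn) !mulr0.
Qed.

Lemma brace_mulr n f s : is_cochain n f ->
  brace f mul_cochain s = \sum_(i < (size s).-1) (-1) ^+ i * f (mergeat i s).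
Proof.
move=> fn; pose G i := (-1) ^+ i * f (mergeat i s).
rewrite /brace -[RHS]/(\sum_(i < (size s).-1) G i).
have inner (i : 'I_(size s).+1) :
  \sum_(k < (size s).+1 - i) (-1) ^+ (i * k.+1) *
     f (take i s ++ mul_cochain (take k (drop i s)) :: drop (i + k) s) =
  if (2 < (size s).+1 - i)%N then G i else 0.
  have term0 (k : 'I_((size s).+1 - i)) : (k : nat) != 2 ->
      (-1) ^+ (i * k.+1) * f (take i s ++ mul_cochain (take k (drop i s)) :: drop (i + k) s) = 0.
    move=> k2; rewrite mul_cochain_size ?(cochain0 _ _ fn) ?mulr0 // size_takel ?size_drop //.
    by have := ltn_ord k; lia.
  case: (ltnP 2 ((size s).+1 - i)) => [lt2|ge2]; last first.
    by apply: big1 => k _; apply: term0; have := ltn_ord k; lia.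
  rewrite (bigD1 (Ordinal lt2)) //= big1 ?addr0 => [|k k2]; last first.
    by apply: term0; apply: contraNneq k2 => k2; apply/eqP/val_inj.
  rewrite -signr_odd oddM andbT signr_odd /mergeat addn2.
  by rewrite (drop_nth 0 (n := i)) ?(drop_nth 0 (n := i.+1)) /= ?take0 //; lia.
under eq_bigr => i _ do rewrite inner.
rewrite -big_mkcond /= -(big_mkord (fun i => 2 < (size s).+1 - i)%N G) -(big_mkord xpredT G).
by rewrite [RHS](big_nat_widen _ _ (size s).+1); [apply: eq_bigl => i; lia | lia].
Qed.

(* For odd [n] the signs of the outer terms of [hdiff] are trivial. *)
Lemma hdiffE n f : is_cochain n f -> odd n ->
  hdiff f = cup f id_cochain + cup id_cochain f - brace f mul_cochain.
Proof.
move=> fn n_odd; apply/funext => -[|e t]; rewrite !addrfctE opprfctE /= (brace_mulr _ fn) !cupE.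
  by rewrite !sum_splits_nil /= big_ord0 !mulr0 mul0r !addr0 subr0.
rewrite sum_splits_rsize1 => [|x y /id_cochain_size /= ->]; last by rewrite mulr0.
rewrite sum_splits_lsize1 => [|x y /id_cochain_size /= ->]; last by rewrite mul0r.
have -> : (-1) ^+ (size t).+1 * f (belast e t) * last e t = f (belast e t) * last e t.
  have [tn|tn] := eqVneq (size t) n; first by rewrite -signr_odd /= tn n_odd mul1r.
  by rewrite (cochain_supp fn (n := n)) ?size_belast // mulr0 mul0r.
have -> : \sum_(i < size t) (-1) ^+ i.+1 * f (mergeat i (e :: t)) =
          - \sum_(i < size t) (-1) ^+ i * f (mergeat i (e :: t)).
  by rewrite -sumrN; apply: eq_bigr => i _; rewrite exprS mulN1r mulNr.
by rewrite [LHS]addrAC [e * f t + _]addrC.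
Qed.

Lemma hdiff_bracket_mul n f : is_cochain n f -> odd n ->
  hdiff f = brace mul_cochain f - brace f mul_cochain.
Proof. by move=> fn n_odd; rewrite (hdiffE fn n_odd) (brace_mull fn n_odd). Qed.

Lemma brace_cupl nb nc f g h : is_cochain nb g -> is_cochain nc h -> odd nc ->
  brace (cup f g) h = cup f (brace g h) + cup (brace f h) g.
Proof.
move=> gnb hnc nc_odd; apply/funext => s; rewrite addrfctE /= brace_sum_splits.
under eq_sum_splits => x r do under eq_sum_splits => y z do
  rewrite cupE sum_splits_cat_cons mulrDr.
under eq_sum_splits => x r do rewrite sum_splitsD.
rewrite sum_splitsD; congr (_ + _).
- transitivity (sum_splits s (fun x r => sum_splits x (fun u u' => sum_splits r (fun y z =>
     f u * (insert_sign (size u') (size y) * g (u' ++ h y :: z)))))).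
    apply: eq_sum_splits => x r; rewrite exchange_sum_splits; apply: eq_sum_splits => y z.
    rewrite -sum_splitsMl; apply: eq_sum_splits => u u'.
    have [yn|yn] := eqVneq (size y) nc; first by rewrite !insert_sign_odd ?yn // !mul1r.
    by rewrite (cochain_supp hnc yn) (cochain0 _ _ gnb) !mulr0.
  rewrite -(sum_splits_assoc s (fun u u' r => sum_splits r (fun y z =>
     f u * (insert_sign (size u') (size y) * g (u' ++ h y :: z))))).
  rewrite cupE; apply: eq_sum_splits => u w; rewrite brace_sum_splits -sum_splitsMl.
  by apply: eq_sum_splits => u' r; rewrite -sum_splitsMl.
- pose G x y z1 z2 := insert_sign (size x) (size y) * f (x ++ h y :: z1) * g z2.
  transitivity (sum_splits s (fun x r => sum_splits r (fun y z => sum_splits z (G x y)))).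
    do 2!apply: eq_sum_splits => ? ?; rewrite -sum_splitsMl.
    by apply: eq_sum_splits => ? ?; rewrite mulrA.
  transitivity (sum_splits s (fun x t =>
      sum_splits t (fun r z2 => sum_splits r (fun y z1 => G x y z1 z2)))).
    by apply: eq_sum_splits => x t; apply: (sum_splits_assoc t (G x)).
  rewrite (sum_splits_assoc s (fun x r z2 => sum_splits r (fun y z1 => G x y z1 z2))).
  rewrite cupE; apply: eq_sum_splits => q z2.
  rewrite brace_sum_splits -sum_splitsMr; apply: eq_sum_splits => x r.
  by rewrite -sum_splitsMr.
Qed.

Definition sum_splits5 s (G : seq A -> seq A -> seq A -> seq A -> seq A -> A) :=
  sum_splits s (fun P r1 => sum_splits r1 (fun Q r2 =>
    sum_splits r2 (fun R r3 => sum_splits r3 (G P Q R)))).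

Lemma eq_sum_splits5 s G1 G2 :
  (forall P Q R S T, G1 P Q R S T = G2 P Q R S T) -> sum_splits5 s G1 = sum_splits5 s G2.
Proof. by move=> G12; do 4!apply: eq_sum_splits => ? ?; apply: G12. Qed.

(* The terms of [(f{g}){h}] in which [h] is inserted into an argument of [f]
   before, resp. after, the one occupied by [g]. *)
Definition brace_before f g h s := sum_splits5 s (fun P Q R S T =>
  insert_sign (size P) (size Q) *
  (insert_sign (size P + (size R).+1) (size S) * f (P ++ h Q :: R ++ g S :: T))).

Definition brace_after f g h s := sum_splits5 s (fun P Q R S T =>
  insert_sign (size P + size Q + size R) (size S) *
  (insert_sign (size P) (size Q) * f (P ++ g Q :: R ++ h S :: T))).

Lemma insert_sign_nested i j k l (a : A) :
  insert_sign (i + j) k * (insert_sign i (j + l.+1) * a) =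
  insert_sign i (j + k + l) * (insert_sign j k * a).
Proof.
rewrite !mulrA /insert_sign -!exprD; congr (_ * _).
rewrite -[LHS]signr_odd -[RHS]signr_odd; congr ((-1) ^+ nat_of_bool _).
by rewrite !(oddD, oddM, addnS) /= ?oddD; case: (odd i); case: (odd j); case: (odd k); case: (odd l).
Qed.

Lemma brace_brace_nested n f g h s : is_cochain n f ->
  sum_splits s (fun x r => sum_splits r (fun y z => insert_sign (size x) (size y) *
     sum_splits x (fun a r' => sum_splits z (fun z1 z2 =>
       insert_sign (size a) (size r' + (size z1).+1) * f (a ++ g (r' ++ h y :: z1) :: z2)))))
  = brace f (brace g h) s.
Proof.
move=> fn; pose G a a' y z1 z2 := insert_sign (size a + size a') (size y) *
  (insert_sign (size a) (size a' + (size z1).+1) * f (a ++ g (a' ++ h y :: z1) :: z2)).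
transitivity (sum_splits5 s G).
  transitivity (sum_splits s (fun x r => sum_splits x (fun a a' =>
      sum_splits r (fun y z => sum_splits z (G a a' y))))).
    apply: eq_sum_splits => x r; under eq_sum_splits => y z do rewrite -sum_splitsMl.
    rewrite exchange_sum_splits; apply: eq_sum_splits_in => a a' <-.
    apply: eq_sum_splits => y z; rewrite -sum_splitsMl size_cat.
    exact: eq_sum_splits.
  exact/esym/(sum_splits_assoc s (fun a a' r => sum_splits r (fun y z => sum_splits z (G a a' y)))).
rewrite brace_sum_splits; apply: eq_sum_splits => a r.
pose H a' y z1 z2 := insert_sign (size a) (size a' + size y + size z1) *
  (insert_sign (size a') (size y) * f (a ++ g (a' ++ h y :: z1) :: z2)).
transitivity (sum_splits r (fun m z2 => sum_splits m (fun a' r2 =>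
    sum_splits r2 (fun y z1 => H a' y z1 z2)))); last first.
  apply: eq_sum_splits => m z2.
  rewrite brace_sum_splits (cochain_sum_splits _ _ _ _ fn) -sum_splitsMl.
  apply: eq_sum_splits_in => a' r2 a'r2.
  rewrite (cochain_sum_splits _ _ _ _ fn) -sum_splitsMl; apply: eq_sum_splits_in => y z1 yz1.
  by rewrite (cochain_sign _ _ _ _ fn) -a'r2 -yz1 !size_cat addnA.
rewrite -(sum_splits_assoc r (fun a' r2 z2 => sum_splits r2 (fun y z1 => H a' y z1 z2))).
apply: eq_sum_splits => a' t.
rewrite -(sum_splits_assoc t (fun y z1 z2 => H a' y z1 z2)).
by do 2!apply: eq_sum_splits => ? ?; rewrite /G /H insert_sign_nested.
Qed.

Lemma brace_brace_expand n f g h s : is_cochain n f ->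
  brace (brace f g) h s = brace f (brace g h) s + brace_before f g h s + brace_after f g h s.
Proof.
move=> fn; rewrite brace_sum_splits.
under eq_sum_splits => x r do under eq_sum_splits => y z do rewrite brace_cat_cons !mulrDr.
under eq_sum_splits => x r do rewrite !sum_splitsD.
rewrite !sum_splitsD (brace_brace_nested _ _ _ fn) [RHS]addrC addrA.
congr (_ + _ + _).
- pose G a b b' y z := insert_sign (size a + size b + size b') (size y) *
    (insert_sign (size a) (size b) * f (a ++ g b :: b' ++ h y :: z)).
  transitivity (sum_splits s (fun x r => sum_splits x (fun a r' =>
      sum_splits r' (fun b b' => sum_splits r (G a b b'))))).
    apply: eq_sum_splits => x r; under eq_sum_splits => y z do rewrite -sum_splitsMl.
    rewrite exchange_sum_splits; apply: eq_sum_splits_in => a r' <-.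
    under eq_sum_splits => y z do rewrite -sum_splitsMl.
    rewrite exchange_sum_splits; apply: eq_sum_splits_in => b b' <-.
    by apply: eq_sum_splits => y z; rewrite !size_cat addnA -catA.
  rewrite -(sum_splits_assoc s (fun a r' r => sum_splits r' (fun b b' => sum_splits r (G a b b')))).
  apply: eq_sum_splits => a t.
  exact/esym/(sum_splits_assoc t (fun b b' r => sum_splits r (G a b b'))).
- do 2!apply: eq_sum_splits => ? ?; rewrite -sum_splitsMl.
  by apply: eq_sum_splits => ? ?; rewrite -sum_splitsMl.
Qed.

Lemma brace_before_odd n m f g h s : is_cochain n f -> is_cochain m g -> odd m ->
  brace_before f g h s = brace_after f h g s.
Proof.
move=> fn gm m_odd; apply: eq_sum_splits5 => P Q R S T.
have [Sm|Sm] := eqVneq (size S) m; last first.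
  by rewrite (cochain_supp gm Sm) -cat_cons catA (cochain0 _ _ fn) !mulr0.
by rewrite ![insert_sign _ (size S)]insert_sign_odd ?Sm // !mul1r.
Qed.

Lemma brace_after_odd n m f g h s : is_cochain n f -> is_cochain m g -> odd m ->
  brace_after f g h s = brace_before f h g s.
Proof.
move=> fn gm m_odd; apply: eq_sum_splits5 => P Q R S T.
have [Qm|Qm] := eqVneq (size Q) m; last by rewrite (cochain_supp gm Qm) (cochain0 _ _ fn) !mulr0.
rewrite [insert_sign _ (size Q)]insert_sign_odd ?Qm // !mul1r /insert_sign; congr (_ * _).
rewrite -[LHS]signr_odd -[RHS]signr_odd; congr ((-1) ^+ nat_of_bool _).
by rewrite !(oddM, oddD) m_odd /=; case: (odd (size P)); case: (odd (size R)).
Qed.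

Lemma brace_preLie nf ng f g h : is_cochain nf f -> is_cochain ng g -> odd ng ->
  brace (brace f g) h + brace f (brace h g) = brace (brace f h) g + brace f (brace g h).
Proof.
move=> fn gn ng_odd; apply/funext => s; rewrite !addrfctE /= !(brace_brace_expand _ _ _ fn).
rewrite (brace_before_odd _ _ fn gn) // (brace_after_odd _ _ fn gn) //.
by rewrite [LHS](ACl (((4*3)*2)*1)).
Qed.

Lemma hdiff_brace m n f g : is_cochain m f -> odd m -> is_cochain n g -> odd n ->
  hdiff (brace f g) = brace (hdiff f) g + brace f (hdiff g) - cup f g - cup g f.
Proof.
move=> fm m_odd gn n_odd; have m_gt0 : (0 < m)%N by case: m m_odd {fm}.
have fg_odd : odd (m + n).-1 by case: m m_odd m_gt0 {fm} => // m; rewrite addSn /= oddD => /negbTE -> _ /=.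
rewrite (hdiffE (is_cochain_brace fm gn m_gt0) fg_odd) (hdiffE fm m_odd).
rewrite (hdiff_bracket_mul gn n_odd) (braceBr _ _ fm).
rewrite -[brace (_ - _) g]/(bracer g _) !raddfB raddfD /= /bracer.
rewrite (brace_cupl _ is_cochain_id gn n_odd) (brace_cupl _ fm gn n_odd) brace_idl.
have := brace_preLie mul_cochain fm gn n_odd; move/esym/(canRL (addrK _)); rewrite -addrA => ->.
set fg_mul := brace (brace f g) mul_cochain.
rewrite [RHS](AC (((((2*2)*1)*1)*1)*1) (((1*7)*(4*8))*((2*3)*(6*5)))) /= !addrN !add0r.
by rewrite [fg_mul + _]addrC opprD addNKr.
Qed.

End Hochschild.

Lemma bin_predp_sign p j : prime p -> (j < p)%N -> (p%:Z %| 'C(p.-1, j)%:Z - (-1) ^+ j)%Z.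
Proof.
move=> p_prime; elim: j => [|j IH] lt_jp; first by rewrite bin0 subrr dvdz0.
have pascal : 'C(p.-1, j.+1)%:Z - (-1) ^+ j.+1 =
              'C(p, j.+1)%:Z - ('C(p.-1, j)%:Z - (-1) ^+ j).
  by rewrite -{2}(prednK (prime_gt0 p_prime)) binS PoszD exprS; ring.
rewrite pascal rpredB ?IH 1?ltnW // dvdzE /= prime_dvd_bin //; lia.
Qed.

(* [i * ('C(p, i) %/ p) = 'C(p.-1, i.-1)], congruent to [(-1) ^+ i.-1] modulo [p]. *)
Lemma dvdz_add_bin_divp p i (a : int) : prime p -> (0 < i < p)%N ->
  (p%:Z %| a * i%:Z - (-1) ^+ i)%Z -> (p%:Z %| a + ('C(p, i) %/ p)%:Z)%Z.
Proof.
move=> p_prime /andP [i_gt0 lt_ip] a_inv.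
have bin_div : (i * ('C(p, i) %/ p))%N = 'C(p.-1, i.-1).
  apply/eqP; rewrite -(eqn_pmul2r (prime_gt0 p_prime)) -mulnA divnK; last first.
    by apply: prime_dvd_bin => //; apply/andP.
  by rewrite [(_ * p)%N]mulnC mul_bin_diag prednK.
have coprime_pi : coprimez p%:Z i%:Z.
  by rewrite coprimezE /= prime_coprime //; apply/negP => /dvdn_leq; lia.
have sign_i : (-1) ^+ i = - (-1) ^+ i.-1 :> int by rewrite -{1}(prednK i_gt0) exprS mulN1r.
rewrite -(Gauss_dvdzl _ coprime_pi) mulrDl -PoszM mulnC bin_div.
rewrite (_ : _ + _ = (a * i%:Z - (-1) ^+ i) + ('C(p.-1, i.-1)%:Z - (-1) ^+ i.-1)).
  by rewrite rpredD // bin_predp_sign //; lia.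
by rewrite sign_i; ring.
Qed.

Section BracePowers.
Variables (A : pzRingType) (d : nat) (x : cochain A).
Hypotheses (x_cochain : is_cochain d x) (d_odd : odd d).
Implicit Types (f g w : cochain A).

Local Notation R := (bracer x).

Definition ad f := brace x f - brace f x.

Lemma adpowE e k f : adpow d e k x f = iter k ad f.
Proof.
elim: k => [|k IH] //=; rewrite IH; apply/funext => s.
by rewrite /gbracket /ad -signr_odd oddM /= d_odd mul1r.
Qed.

Let d_gt0 : (0 < d)%N. Proof. by case: d d_odd. Qed.

Lemma is_cochain_iter_bracer m f k : is_cochain m f -> (0 < m)%N ->
  is_cochain (m + k * d.-1) (iter k R f).
Proof.
move=> fm m_gt0; elim: k => [|k IH]; first by rewrite addn0.
rewrite (_ : (m + k.+1 * d.-1 = (m + k * d.-1 + d).-1)%N); last by rewrite mulSn; lia.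
by apply: is_cochain_brace; rewrite // addn_gt0 m_gt0.
Qed.

Lemma is_cochain_iter_ad e f k : is_cochain e f -> (0 < e)%N ->
  is_cochain (e + k * d.-1) (iter k ad f).
Proof.
move=> fe e_gt0; elim: k => [|k IH]; first by rewrite addn0.
have e'_gt0 : (0 < e + k * d.-1)%N by rewrite addn_gt0 e_gt0.
apply: is_cochainB.
  rewrite (_ : (e + k.+1 * d.-1 = (d + (e + k * d.-1)).-1)%N); last by rewrite mulSn; lia.
  exact: is_cochain_brace x_cochain IH d_gt0.
rewrite (_ : (e + k.+1 * d.-1 = (e + k * d.-1 + d).-1)%N); last by rewrite mulSn; lia.
exact: is_cochain_brace IH x_cochain e'_gt0.
Qed.

Lemma is_cochain_bpow k : is_cochain (d + k * d.-1) (bpow x k.+1).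
Proof. exact: is_cochain_iter_bracer. Qed.

Lemma odd_bpow_degree k : odd (d + k * d.-1).
Proof. by case: d d_odd => // d' /= d'_even; rewrite ?addSn /= oddD oddM (negbTE d'_even) andbF. Qed.

Definition brace_expansion n w :=
  \sum_(0 <= m < n.+1) iter (n - m) R (iter m ad w) *+ 'C(n, m).

Lemma brace_expansionS n w :
  brace_expansion n.+1 w = R (brace_expansion n w) + brace_expansion n (ad w).
Proof.
rewrite /brace_expansion big_nat_recl // subn0 bin0 mulr1n.
under eq_bigr => i _ do rewrite subSS binS mulrnDr iterSr.
rewrite big_split /= addrA; congr (_ + _).
rewrite raddf_sum [RHS]big_nat_recl // subn0 bin0 mulr1n; congr (_ + _).
rewrite big_nat_recr // bin_small // mulr0n /= addr0 big_nat_cond [RHS]big_nat_cond.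
apply: eq_bigr => i; rewrite andbT => /andP [_ lt_in].
by rewrite raddfMn -(iterS (n - i.+1)) subnSK // -iterS iterSr.
Qed.

(* The pre-Lie identity moves [x] past [w]: (f{x}){w} = (f{w}){x} + f{ad w}. *)
Lemma brace_bpow n w : brace (bpow x n.+1) w = brace_expansion n.+1 w.
Proof.
elim: n w => [|n IH] w.
  by rewrite /brace_expansion !big_nat_recl // big_geq //= !mulr1n addr0 addrC subrK.
have fn := is_cochain_bpow n.
have := brace_preLie w fn x_cochain d_odd; move/(canRL (addrK _)).
rewrite -[brace (bpow x n.+1) x]/(bpow x n.+2) => ->.
by rewrite brace_expansionS -!IH /ad (braceBr _ _ fn) addrA.
Qed.

Definition cup_comb k (a : nat -> int) :=
  \sum_(1 <= j < k) cup (bpow x j) (bpow x (k - j)) *~ a j.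

Lemma cup_combD k (a b : nat -> int) : cup_comb k (fun j => a j + b j) = cup_comb k a + cup_comb k b.
Proof. by rewrite /cup_comb -big_split; apply: eq_bigr => j _; rewrite mulrzDr. Qed.

Lemma is_cochain_cup_comb k (a : nat -> int) : is_cochain (k * d.-1).+2 (cup_comb k a).
Proof.
rewrite /cup_comb big_nat_cond; apply: is_cochain_sum => j /andP [/andP [j_gt0 lt_jk] _].
apply/is_cochainMz.
have := is_cochain_cup (is_cochain_bpow j.-1)
                       (is_cochain_bpow (k - j).-1).
rewrite !prednK ?subn_gt0 //; congr (is_cochain _ _).
by case: d d_odd => // d' _ /=; nia.
Qed.

Lemma cup_combS k :
  cup_comb k.+2 (fun j => 'C(k.+2, j)%:Z) =
  R (cup_comb k.+1 (fun j => 'C(k.+1, j)%:Z)) + cup (bpow x k.+1) x + cup x (bpow x k.+1).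
Proof.
rewrite /cup_comb !big_add1 /=.
under eq_big_nat => i _ do rewrite binS PoszD mulrzDr.
rewrite big_split /= big_nat_recr // big_nat_recl // !subSS subSnn subn0 binn bin0 !mulr1z.
rewrite [LHS](AC (2*2) (((1*4)*2)*3)) /=; congr (_ + _ + _).
rewrite raddf_sum -big_split /=; apply: eq_big_nat => i /andP [_ lt_ik].
rewrite !subSS (subSn (ltnW lt_ik)) -(subnSK lt_ik) raddfMz /= /bracer.
by rewrite (brace_cupl _ (is_cochain_bpow _) x_cochain d_odd) mulrzDl.
Qed.

Section Bockstein.
Variables (p : nat) (u : cochain A).
Hypotheses (u_cochain : is_cochain d.+1 u) (hdiff_x : hdiff x = u *+ p).

Definition bockstein_lift k :=
  \sum_(1 <= j < k.+1) iter (k - j) R (iter j.-1 ad u) *+ 'C(k, j).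

Lemma bockstein_liftS k : bockstein_lift k.+1 = R (bockstein_lift k) + brace_expansion k u.
Proof.
rewrite /bockstein_lift !big_add1 /=.
under eq_big_nat => i _ do rewrite subSS binS mulrnDr.
rewrite big_split /= big_nat_recr //= bin_small // mulr0n addr0 raddf_sum.
congr (_ + _); apply: eq_big_nat => i /andP [_ lt_ik].
by rewrite raddfMn -iterS subnSK.
Qed.

Lemma hdiff_bpow k :
  hdiff (bpow x k.+1) = bockstein_lift k.+1 *+ p - cup_comb k.+1 (fun j => 'C(k.+1, j)%:Z).
Proof.
elim: k => [|k IH].
  by rewrite /bockstein_lift /cup_comb big_nat1 big_geq // mulr1n subr0.
rewrite -[bpow x k.+2]/(brace (bpow x k.+1) x).
rewrite (hdiff_brace (is_cochain_bpow k) (odd_bpow_degree k) x_cochain d_odd).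
rewrite -[brace (hdiff _) x]/(R _) IH hdiff_x (braceMnr _ _ (is_cochain_bpow k)).
rewrite brace_bpow raddfB raddfMn /= (bockstein_liftS k.+1) cup_combS mulrnDl.
by rewrite !opprD !addrA; congr (_ - _ - _); rewrite addrAC.
Qed.

Lemma is_cochain_rad k j : (0 < j <= k)%N ->
  is_cochain (k * d.-1).+2 (iter (k - j) R (iter j.-1 ad u)).
Proof.
case/andP=> j_gt0 le_jk.
rewrite (_ : (k * d.-1).+2 = (d.+1 + j.-1 * d.-1) + (k - j) * d.-1)%N; last first.
  by case: d d_odd => // d' _; nia.
by apply: is_cochain_iter_bracer => //; apply: is_cochain_iter_ad.
Qed.

Section Prime.
Hypothesis p_prime : prime p.

Let bin_divp j := ('C(p, j) %/ p)%:Z.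

Definition bockstein_bpow := bockstein_lift p - cup_comb p bin_divp.

Lemma is_cochain_bockstein_bpow : is_cochain (p * d.-1).+2 bockstein_bpow.
Proof.
apply/is_cochainB/is_cochain_cup_comb; rewrite /bockstein_lift big_nat_cond.
by apply: is_cochain_sum => j /andP [lt_jp _]; apply/is_cochainMn/is_cochain_rad.
Qed.

Lemma hdiff_bpow_prime : hdiff (bpow x p) = bockstein_bpow *+ p.
Proof.
rewrite -(prednK (prime_gt0 p_prime)) hdiff_bpow prednK ?prime_gt0 //.
rewrite mulrnBl; congr (_ - _); rewrite /cup_comb -sumrMnl; apply: eq_big_nat => j lt_jp.
by rewrite pmulrn -mulrzA -PoszM divnK // prime_dvd_bin.
Qed.

Lemma bockstein_lift_prime :
  bockstein_lift p =
  (\sum_(1 <= j < p) iter (p - j) R (iter j.-1 ad u) *+ ('C(p, j) %/ p)) *+ p + iter p.-1 ad u.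
Proof.
rewrite /bockstein_lift big_nat_recr ?prime_gt0 //= subnn binn mulr1n -sumrMnl.
congr (_ + _); apply: eq_big_nat => j lt_jp.
by rewrite -mulrnA divnK // prime_dvd_bin.
Qed.

Variables (c : nat -> int).
Hypothesis c_inv : forall i, (0 < i < p)%N -> (p%:Z %| c i * i%:Z - (-1) ^+ i)%Z.

Lemma zeta1_cup_comb : zeta1 p c x = cup_comb p c.
Proof. by apply/funext => s; rewrite /cup_comb fct_sumE; under eq_bigr do rewrite mulrzfctE. Qed.

Lemma cup_comb_divp :
  cup_comb p (fun j => ((c j + bin_divp j) %/ p%:Z)%Z) *+ p = cup_comb p c + cup_comb p bin_divp.
Proof.
rewrite -cup_combD /cup_comb -sumrMnl; apply: eq_big_nat => j lt_jp.
by rewrite pmulrn -mulrzA divzK // dvdz_add_bin_divp // c_inv.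
Qed.

Definition zeta_defect :=
  cup_comb p (fun j => ((c j + bin_divp j) %/ p%:Z)%Z) -
  \sum_(1 <= j < p) iter (p - j) R (iter j.-1 ad u) *+ ('C(p, j) %/ p).

Lemma is_cochain_zeta_defect : is_cochain (p * d.-1).+2 zeta_defect.
Proof.
apply/is_cochainB; first exact: is_cochain_cup_comb.
rewrite big_nat_cond; apply: is_cochain_sum => j /andP [/andP [j_gt0 lt_jp] _].
by apply/is_cochainMn/is_cochain_rad; rewrite j_gt0 ltnW.
Qed.

Lemma zeta1_bockstein : zeta1 p c x - bockstein_bpow + iter p.-1 ad u = zeta_defect *+ p.
Proof.
rewrite zeta1_cup_comb /bockstein_bpow bockstein_lift_prime /zeta_defect mulrnBl cup_comb_divp.
by rewrite opprB opprD !addrA addrNK.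
Qed.

End Prime.
End Bockstein.
End BracePowers.

Theorem proposition6p5 (A : pzRingType) (p d : nat) (c : nat -> int)
    (xt u : cochain A) :
  prime p -> (3 <= p)%N -> Zfree A ->
  odd d -> is_cochain d xt ->
  (* d xt = p u, i.e. u is the integral lift of beta x *)
  is_cochain d.+1 u -> (forall s, hdiff xt s = u s *+ p) ->
  (* c i represents (-1)^i / i in Z_p *)
  (forall i : nat, (0 < i < p)%N -> ((p%:Z) %| c i * i%:Z - (-1) ^+ i)%Z) ->
  exists w z : cochain A,
    [/\ is_cochain (p * (d - 1)).+2 w,
        (* d (xt^[p]) = p w, i.e. w lifts beta(xi_1 x) *)
        (forall s, hdiff (bpow xt p) s = w s *+ p),
        is_cochain (p * (d - 1)).+2 z &
        (* zeta_1 x = beta(xi_1 x) - (ad x)^(p-1) (beta x)  modulo p *)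
        (forall s, zeta1 p c xt s - w s + adpow d d.+1 (p - 1) xt u s = z s *+ p)].
Proof.
move=> p_prime _ _ d_odd x_cochain u_cochain hdiff_x c_inv.
have {}hdiff_x : hdiff xt = u *+ p by apply/funext => s; rewrite natmulfctE hdiff_x.
exists (bockstein_bpow xt p u), (zeta_defect xt p u c); rewrite !subn1; split.
- exact: is_cochain_bockstein_bpow.
- by move=> s; rewrite (hdiff_bpow_prime x_cochain d_odd hdiff_x p_prime) natmulfctE.
- exact: is_cochain_zeta_defect.
- move=> s; rewrite adpowE //.
  have /(congr1 (fun f => f s)) := zeta1_bockstein xt u p_prime c_inv.
  by rewrite natmulfctE.
Qed.
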